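(* Let $n=2k$, $1<r<k$ with $\gcd(r,k)=1$, and $G(x)=\sum_{i=1}^{2^r-1}x^{(i2^{k-r}+1)(2^k-1)+1}$, a vectorial bent function $\mathbb{F}_{2^n}\to\mathbb{F}_{2^k}$. For $\lambda\in\mathbb{F}_{2^k}^*$ let $G_\lambda(x)=\mathrm{Tr}^k_1(\lambda G(x))$ and let $G_\lambda^*$ be its dual. Let $t=2^{r-1}-1$ and $d_t=(2^k-1)(t2^{k-r}+1)+1$ (so that $\gcd(d_t,2^n-1)=1$). For $\lambda\in\mathbb{F}_{2^k}^*$ let $\delta$ be the unique element of $\mathbb{F}_{2^n}$ with $\lambda=\delta^{d_t}$. Then $G_\lambda^*(x)=G_1^*(\delta^{-1}x)$. In particular, $D_aD_bG_\lambda^*=0$ for all $a,b\in\mathbb{F}_{2^k}^*$.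
   Context: $\mathrm{Tr}^m_1(x)=\sum_{i=0}^{m-1}x^{2^i}$. For a bent Boolean function $f$ on $\mathbb{F}_{2^n}$ (i.e. $|W_f(a)|=2^{n/2}$ for all $a$, where $W_f(a)=\sum_x(-1)^{f(x)+\mathrm{Tr}^n_1(ax)}$), the dual $f^*$ is defined by $W_f(a)=2^{n/2}(-1)^{f^*(a)}$. $D_aD_bf(x)=f(x)+f(x+a)+f(x+b)+f(x+a+b)$. *)

From HB Require Import structures.
From mathcomp Require Import all_boot all_order all_algebra all_field.
Set Implicit Arguments. Unset Strict Implicit. Unset Printing Implicit Defensive.
Import GRing.Theory Num.Theory.
Local Open Scope ring_scope.

Definition trace (F : finFieldType) (m : nat) (x : F) : F :=
  \sum_(i < m) x ^+ (2 ^ i).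

(* (-1)^e for an element e of F_2 (seen inside F): 1 if e = 0, -1 otherwise. *)
Definition sgnF (F : finFieldType) (e : F) : int := if e == 0 then 1 else -1.

Definition sgnb (b : bool) : int := if b then -1 else 1.

Definition walsh (F : finFieldType) (n : nat) (f : F -> bool) (a : F) : int :=
  \sum_(x : F) sgnb (f x) * sgnF (trace n (a * x)).

Definition bent (F : finFieldType) (n : nat) (f : F -> bool) : Prop :=
  forall a : F, `|walsh n f a| = (2 ^ (n %/ 2))%:Z.

(* Dual: W_f(a) = 2^(n/2) (-1)^(f^*(a)); i.e. f^*(a) = 1 iff W_f(a) < 0.
   (This agrees with the paper's definition whenever f is bent.) *)
Definition dual (F : finFieldType) (n : nat) (f : F -> bool) (a : F) : bool :=
  walsh n f a < 0.

Definition D2 (F : finFieldType) (f : F -> bool) (a b x : F) : bool :=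
  (f x (+) f (x + a) (+) f (x + b) (+) f (x + a + b)).

Definition Gfun (F : finFieldType) (k r : nat) (x : F) : F :=
  \sum_(1 <= i < 2 ^ r) x ^+ ((i * 2 ^ (k - r) + 1) * (2 ^ k - 1) + 1).

Definition Glam (F : finFieldType) (k r : nat) (lam : F) (x : F) : bool :=
  trace k (lam * Gfun k r x) != 0.

From HB Require Import structures.
From mathcomp Require Import all_boot all_order all_algebra all_field.
From mathcomp Require Import zify ring.
Set Implicit Arguments. Unset Strict Implicit. Unset Printing Implicit Defensive.
Import GRing.Theory Num.Theory.
Local Open Scope ring_scope.

(* Two facts drive the proof.

   First, delta = lam.  Since gcd(d_t, 2^n - 1) = 1, the map x |-> x^d_t is a bijection of F,
   and lam^d_t = lam because lam^(2^k - 1) = 1.  As G(lam z) = lam G(z) for lam in F_(2^k)^*,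
   the substitution x |-> lam x in the Walsh sum gives W_(G_lam)(x) = W_(G_1)(lam^-1 x).

   Second, let T(x) = x + x^(2^k) and c(x) = T(x) / T(x)^(2^(k-r)).  From
   T(x)^(2^(k-r)) G(x) = x^(2^(k-r)+1) + x^(2^k (2^(k-r)+1)) one gets, for v in F_(2^k),
   G(x + v) = G(x) + v + v^(2^(k-r)) c(x), hence
   Tr^k_1(G(x + T y)) = Tr^k_1(G(x)) + Tr^n_1(y pi(x)) with pi(x) = 1 + c(x)^(2^r).
   Averaging the Walsh sum over the translations by T(y) restricts it to the fiber
   pi(x) = T(w).  As gcd(r, k) = 1, pi(x) = pi(x') forces T(x) = T(x'), so this fiber is a
   coset x0 + F_(2^k), and W_(G_1)(w + a) = (-1)^(Tr^n_1(a x0)) W_(G_1)(w) for a in F_(2^k).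
   The sign is additive in a, so D_a D_b G_1^* = 0. *)

Section Powers.

Variable R : comNzRingType.

Lemma expr_cycle (x : R) N q : x ^+ N.+1 = x -> x ^+ (q * N).+1 = x.
Proof.
move=> hx; elim: q => [|q IH]; first by rewrite expr1.
by rewrite mulSn -addSn exprD hx -exprS IH.
Qed.

Lemma expr2_idem_exp2 (e : R) j : e ^+ 2 = e -> e ^+ (2 ^ j) = e.
Proof.
move=> he; elim: j => [|j IH]; first by rewrite expr1.
by rewrite expnSr exprM IH.
Qed.

Lemma expr_exp2_fix_mul (w : R) a m : w ^+ (2 ^ a) = w -> w ^+ (2 ^ (a * m)) = w.
Proof.
move=> h; elim: m => [|m IH]; first by rewrite muln0 expr1.
by rewrite mulnS expnD exprM h IH.
Qed.

End Powers.

Lemma sqr_idP (F : fieldType) (e : F) : e ^+ 2 = e -> e = 0 \/ e = 1.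
Proof.
move=> h; have : e * (e - 1) == 0 by rewrite mulrBr mulr1 -expr2 h subrr.
by rewrite mulf_eq0 subr_eq0 => /orP[] /eqP ->; [left | right].
Qed.

Lemma sgnFE (F : finFieldType) (e : F) : sgnF e = sgnb (e != 0).
Proof. by rewrite /sgnF /sgnb; case: (e == 0). Qed.

Lemma D2_lt0_sgnF (F : finFieldType) (W : F -> int) (w a b al be : F) :
  W (w + a) = sgnF al * W w -> W (w + b) = sgnF be * W w ->
  W (w + a + b) = sgnF al * sgnF be * W w ->
  D2 (fun x => W x < 0) a b w = false.
Proof.
rewrite /D2 => -> -> ->; rewrite /sgnF.
by case: (al == 0); case: (be == 0);
  rewrite ?mulN1r ?mulrNN ?mul1r ?opprK ?oppr_lt0; case: (W w < 0); case: (0 < W w).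
Qed.

Section Characteristic2.

Variable F : finFieldType.
Hypothesis hchar : (2 \in [pchar F])%N.

Lemma frobD j (x y : F) : (x + y) ^+ (2 ^ j) = x ^+ (2 ^ j) + y ^+ (2 ^ j).
Proof. by apply: exprDn_pchar; rewrite (eq_pnat _ (pcharf_eq hchar)) pnatX pnat_id. Qed.

Lemma frob_sum j (I : Type) (s : seq I) (P : pred I) (f : I -> F) :
  (\sum_(i <- s | P i) f i) ^+ (2 ^ j) = \sum_(i <- s | P i) f i ^+ (2 ^ j).
Proof.
apply: (big_morph (fun x : F => x ^+ (2 ^ j))); first exact: frobD.
by rewrite expr0n expn_eq0.
Qed.

Lemma frob_inj j : injective (fun x : F => x ^+ (2 ^ j)).
Proof.
move=> x y /= h; apply/eqP; rewrite -subr_eq0.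
have : (x - y) ^+ (2 ^ j) == 0 by rewrite (oppr_pchar2 hchar) frobD h (addrr_pchar2 hchar).
by rewrite expf_eq0 => /andP[].
Qed.

Lemma frob_fix_subn (w : F) a b :
  w ^+ (2 ^ (a + b)) = w -> w ^+ (2 ^ a) = w -> w ^+ (2 ^ b) = w.
Proof.
move=> hab ha; apply: (@frob_inj a) => /=.
by rewrite -exprM -expnD addnC hab ha.
Qed.

Lemma frob_fix_coprime (w : F) r k : (0 < r)%N -> coprime r k ->
  w ^+ (2 ^ r) = w -> w ^+ (2 ^ k) = w -> w ^+ 2 = w.
Proof.
move=> r_gt0 rk_coprime hr hk; have [a _] := Bezoutl k r_gt0.
rewrite (eqP rk_coprime) => /dvdnP[q hq].
have h1 : w ^+ (2 ^ (k * a + 1)) = w by rewrite addnC mulnC hq mulnC expr_exp2_fix_mul.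
by have := frob_fix_subn h1 (expr_exp2_fix_mul _ hk); rewrite expn1.
Qed.

Lemma trace_add m (x y : F) : trace m (x + y) = trace m x + trace m y.
Proof. by rewrite /trace -big_split; apply: eq_bigr => i _; rewrite frobD. Qed.

Lemma trace_frob m (z : F) j : trace m (z ^+ (2 ^ j)) = trace m z ^+ (2 ^ j).
Proof. by rewrite /trace frob_sum; apply: eq_bigr => i _; rewrite exprAC. Qed.

Lemma trace_sqr_id m (z : F) : z ^+ (2 ^ m) = z -> trace m z ^+ 2 = trace m z.
Proof.
move=> hz; rewrite -[2%N]expn1 -trace_frob /trace.
under eq_bigr => i _ do rewrite -exprM -expnD add1n.
case: m hz => [|m] hz; first by rewrite !big_ord0.
rewrite big_ord_recr big_ord_recl /= hz addrC.
by congr (_ + _); apply: eq_bigr => i _.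
Qed.

Lemma trace_double k (z : F) : trace k (z + z ^+ (2 ^ k)) = trace (k + k) z.
Proof.
rewrite /trace big_split_ord /= -big_split /=; apply: eq_bigr => i _.
by rewrite frobD -exprM -expnD addnC.
Qed.

Lemma trace_double_fix k (z : F) : z ^+ (2 ^ k) = z -> trace (k + k) z = 0.
Proof.
move=> hz; rewrite -trace_double hz (addrr_pchar2 hchar) /trace big1 // => i _.
by rewrite expr0n expn_eq0.
Qed.

Lemma sgnFD (a b : F) : a ^+ 2 = a -> b ^+ 2 = b -> sgnF (a + b) = sgnF a * sgnF b.
Proof.
move=> /sqr_idP[]-> /sqr_idP[]->; rewrite /sgnF ?addr0 ?add0r ?eqxx ?oner_eq0 //.
by rewrite (addrr_pchar2 hchar) eqxx.
Qed.

Lemma geom_sum_pchar2 (z : F) N : (0 < N)%N ->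
  (1 + z) * \sum_(1 <= i < N) z ^+ i = z ^+ N + z.
Proof.
move=> N_gt0; rewrite mulr_sumr (telescope_sumr_eq (fun i => z ^+ i)) //.
  by rewrite expr1 (oppr_pchar2 hchar).
by move=> i _; rewrite exprS mulrDl mul1r (oppr_pchar2 hchar) addrC.
Qed.

End Characteristic2.

Section FiniteField2n.

Variables (F : finFieldType) (n : nat).
Hypotheses (hchar : (2 \in [pchar F])%N) (hcard : #|F| = (2 ^ n)%N).

Lemma frob_card (x : F) : x ^+ (2 ^ n) = x.
Proof. by rewrite -hcard expf_card. Qed.

Lemma trace_card_sqr_id (z : F) : trace n z ^+ 2 = trace n z.
Proof. exact/(trace_sqr_id hchar)/frob_card. Qed.

Lemma trace_card_frob (z : F) j : trace n (z ^+ (2 ^ j)) = trace n z.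
Proof. by rewrite (trace_frob hchar) expr2_idem_exp2 // trace_card_sqr_id. Qed.

Lemma sgnF_traceD (x y : F) :
  sgnF (trace n (x + y)) = sgnF (trace n x) * sgnF (trace n y).
Proof. by rewrite (trace_add hchar) (sgnFD hchar) ?trace_card_sqr_id. Qed.

Hypothesis n_gt0 : (0 < n)%N.

(* The trace is a polynomial of degree 2^(n-1) < #|F|, so it cannot vanish everywhere. *)
Lemma exists_trace_eq1 : exists y : F, trace n y = 1.
Proof.
pose p : {poly F} := \sum_(i < n) 'X^(2 ^ i).
have hp y : p.[y] = trace n y.
  by rewrite /p horner_sum /trace; apply: eq_bigr => i _; rewrite hornerXn.
have n1_lt : (n.-1 < n)%N by rewrite ltn_predL.
have p_neq0 : p != 0.
  apply/eqP => /(congr1 (fun q : {poly F} => q`_(2 ^ n.-1))).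
  rewrite coef0 /p coef_sum (bigD1 (Ordinal n1_lt)) //= coefXn eqxx big1 ?addr0.
    by move/eqP; rewrite oner_eq0.
  move=> i hi; rewrite coefXn eqn_exp2l //.
  by case: eqP => // h; move: hi; rewrite -val_eqE /= h eqxx.
have size_p : (size p <= (2 ^ n.-1).+1)%N.
  apply: leq_trans (size_sum _ _ _) _.
  apply/bigmax_leqP => i _; rewrite size_polyXn ltnS leq_exp2l //.
  by rewrite -ltnS prednK.
have [/forallP tr0 | ] := boolP [forall y : F, trace n y == 0].
  have := max_poly_roots p_neq0 (rs := enum F).
  rewrite enum_uniq -cardE hcard.
  have -> : all (root p) (enum F) by apply/allP => y _; rewrite /root hp tr0.
  move=> /(_ isT isT) /leq_trans /(_ size_p).
  by rewrite ltnS leq_exp2l // -ltnS prednK // ltnn.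
rewrite negb_forall => /existsP[y hy]; exists y.
by case: (sqr_idP (trace_card_sqr_id y)) hy => ->; rewrite ?eqxx.
Qed.

Lemma sum_sgnF_trace (c : F) :
  \sum_(y : F) sgnF (trace n (y * c)) = if c == 0 then #|F|%:Z else 0.
Proof.
have [-> | c_neq0] := eqVneq c 0.
  rewrite (eq_bigr (fun _ => 1)) ?sumr_const ?natz // => y _.
  by rewrite mulr0 /trace big1 /sgnF ?eqxx // => i _; rewrite expr0n expn_eq0.
have [y0 tr_y0] := exists_trace_eq1.
have : \sum_(y : F) sgnF (trace n (y * c)) = - \sum_(y : F) sgnF (trace n (y * c)).
  rewrite [LHS](reindex_inj (addIr (y0 / c))) /= -sumrN; apply: eq_bigr => y _.
  by rewrite mulrDl divfK // sgnF_traceD tr_y0 /sgnF oner_eq0 mulrN1.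
by move/eqP; rewrite -addr_eq0 -mulr2n mulrn_eq0 => /eqP.
Qed.

(* Averaging W_f(w) over the translations by T y collapses the sum onto the fiber pi^-1(T w). *)
Lemma walsh_fiber (f : F -> bool) (T pi : F -> F) (w : F) :
  (forall u v, trace n (u * T v) = trace n (v * T u)) ->
  (forall x y, sgnb (f (x + T y)) = sgnb (f x) * sgnF (trace n (y * pi x))) ->
  walsh n f w = \sum_(x | pi x == T w) sgnb (f x) * sgnF (trace n (w * x)).
Proof.
move=> T_sym f_shift.
pose chi x := sgnb (f x) * sgnF (trace n (w * x)).
have chi_shift x y : chi (x + T y) = chi x * sgnF (trace n (y * (pi x + T w))).
  rewrite /chi f_shift mulrDr sgnF_traceD T_sym mulrDr sgnF_traceD; ring.
have walsh_translate : walsh n f w *+ #|F| =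
    \sum_(x : F) chi x * \sum_(y : F) sgnF (trace n (y * (pi x + T w))).
  under [RHS]eq_bigr do rewrite mulr_sumr.
  rewrite -sumr_const [RHS]exchange_big /=; apply: eq_bigr => y _.
  under [RHS]eq_bigr => x _ do rewrite -chi_shift.
  by rewrite /walsh [LHS](reindex_inj (addIr (T y))).
apply/eqP; rewrite -(eqr_pMn2r (n := #|F|)) ?hcard ?expn_gt0 // -hcard walsh_translate.
rewrite -sumrMnl [X in _ == X]big_mkcond /=; apply/eqP/eq_bigr => x _.
rewrite sum_sgnF_trace addr_eq0 (oppr_pchar2 hchar).
by case: eqP => _; rewrite ?mulr0 ?mul0rn // -natz mulr_natr.
Qed.

End FiniteField2n.

Section VectorialBent.

Variables (F : finFieldType) (k r : nat).
Hypotheses (hchar : (2 \in [pchar F])%N) (hcard : #|F| = (2 ^ (k + k))%N).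
Hypotheses (r_gt0 : (0 < r)%N) (r_le_k : (r <= k)%N).

Local Notation fixed x := (x%R ^+ (2 ^ k) = x%R).
Local Notation s := (2 ^ (k - r))%N.

Definition reltrace (x : F) := x + x ^+ (2 ^ k).

Lemma fixed_unit (x : F) : fixed x -> x != 0 -> x ^+ (2 ^ k - 1) = 1.
Proof.
by move=> hx x_neq0; apply: (mulIf x_neq0); rewrite mul1r -exprSr subn1 prednK ?expn_gt0.
Qed.

Lemma Gfun_monomial (x : F) i :
  x ^+ ((i * s + 1) * (2 ^ k - 1) + 1) = x * x ^+ (2 ^ k - 1) * (x ^+ (2 ^ k - 1) ^+ s) ^+ i.
Proof.
rewrite exprD expr1 mulrC (mulnC _ (2 ^ k - 1)%N) exprM exprD expr1.
by rewrite mulnC exprM -mulrA (mulrC (_ ^+ i)).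
Qed.

Lemma Gfun0 : Gfun k r (0 : F) = 0.
Proof. by rewrite /Gfun big1 // => i _; rewrite expr0n addn1. Qed.

Lemma GfunZ (d z : F) : fixed d -> d != 0 -> Gfun k r (d * z) = d * Gfun k r z.
Proof.
move=> hd d_neq0; rewrite /Gfun mulr_sumr; apply: eq_bigr => i _.
by rewrite exprMn [d ^+ _]Gfun_monomial fixed_unit // !expr1n !mulr1.
Qed.

(* On the subfield, G adds up 2^r - 1 copies of x, an odd number. *)
Lemma Gfun_fixed (x : F) : fixed x -> Gfun k r x = x.
Proof.
move=> hx; have [->|x_neq0] := eqVneq x 0; first exact: Gfun0.
rewrite /Gfun (eq_bigr (fun _ => x)) => [|i _]; last first.
  by rewrite Gfun_monomial fixed_unit // !expr1n !mulr1.
rewrite sumr_const_nat.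
have -> : (2 ^ r - 1 = (2 ^ r.-1 - 1) * 2 + 1)%N.
  rewrite -(prednK r_gt0) expnS /=.
  have : (0 < 2 ^ r.-1)%N by rewrite expn_gt0.
  move: (2 ^ r.-1)%N => m; lia.
by rewrite mulrnDr mulnC mulrnA (mulrn_pchar hchar) mul0rn add0r.
Qed.

Lemma reltraceD (x y : F) : reltrace (x + y) = reltrace x + reltrace y.
Proof. by rewrite /reltrace (frobD hchar) addrACA. Qed.

Lemma reltraceD_fixed (x v : F) : fixed v -> reltrace (x + v) = reltrace x.
Proof. by move=> hv; rewrite reltraceD /reltrace hv (addrr_pchar2 hchar) addr0. Qed.

Lemma reltrace_eq0 (x : F) : reltrace x = 0 -> fixed x.
Proof. by move/eqP; rewrite /reltrace addr_eq0 (oppr_pchar2 hchar) => /eqP. Qed.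

Lemma reltrace_fixed (x : F) : fixed (reltrace x).
Proof. by rewrite /reltrace (frobD hchar) -exprM -expnD (frob_card hcard) addrC. Qed.

Lemma trace_reltrace_sym (u v : F) :
  trace (k + k) (u * reltrace v) = trace (k + k) (v * reltrace u).
Proof.
rewrite /reltrace !mulrDr !(trace_add hchar) mulrC; congr (_ + _).
rewrite -(trace_card_frob hchar hcard _ k) exprMn -exprM -expnD (frob_card hcard).
by rewrite mulrC.
Qed.

(* With u = x^(2^k - 1) and z = u^s: G(x) = x u (z + ... + z^(2^r - 1)),
   reltrace(x)^s = x^s (1 + z) and u^(2^k + 1) = 1. *)
Lemma Gfun_reltrace (x : F) :
  reltrace x ^+ s * Gfun k r x = x ^+ s.+1 + (x ^+ (2 ^ k)) ^+ s.+1.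
Proof.
have [->|x_neq0] := eqVneq x 0.
  by rewrite Gfun0 mulr0 !expr0n /= expn_eq0 add0r expr0n.
have K_gt0 : (0 < 2 ^ k)%N by rewrite expn_gt0.
set K := (2 ^ k)%N in K_gt0 *.
set u := x ^+ (K - 1); set z := u ^+ s.
have xK : x ^+ K = x * u by rewrite /u -exprS subn1 prednK.
have Gx : Gfun k r x = x * u * \sum_(1 <= i < 2 ^ r) z ^+ i.
  by rewrite /Gfun mulr_sumr; apply: eq_bigr => i _; rewrite Gfun_monomial.
have uK1 : u * u ^+ K = 1.
  apply: (mulIf x_neq0); rewrite mul1r /u -exprS -exprM -exprSr.
  have -> : ((K - 1) * K.+1).+1 = (2 ^ (k + k))%N by rewrite expnD -/K; nia.
  exact: (frob_card hcard).
have zr : z ^+ (2 ^ r) = u ^+ K by rewrite /z -exprM -expnD subnK.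
have Ts : reltrace x ^+ s = x ^+ s * (1 + z).
  by rewrite /reltrace (frobD hchar) -/K xK exprMn mulrDr mulr1.
have := geom_sum_pchar2 hchar z (expn_gt0 2 r); rewrite zr Ts Gx xK.
set S := \sum_(_ <= _ < _) _ => hg.
have -> : x ^+ s * (1 + z) * (x * u * S) = x ^+ s * x * (u * ((1 + z) * S)) by ring.
by rewrite hg mulrDr uK1 !exprS /z exprMn; ring.
Qed.

Lemma Gfun_fixed_range (x : F) : fixed (Gfun k r x).
Proof.
have [/reltrace_eq0 hx|T_neq0] := eqVneq (reltrace x) 0; first by rewrite Gfun_fixed hx.
have Ts_neq0 : reltrace x ^+ s != 0 by rewrite expf_neq0.
have -> : Gfun k r x = (reltrace x ^+ s)^-1 * (x ^+ s.+1 + x ^+ (2 ^ k) ^+ s.+1).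
  by rewrite -Gfun_reltrace mulKf.
have xKK : (x ^+ (2 ^ k)) ^+ (2 ^ k) = x by rewrite -exprM -expnD (frob_card hcard).
have Ts_fixed : fixed (reltrace x ^+ s) by rewrite exprAC reltrace_fixed.
have num_fixed : fixed (x ^+ s.+1 + x ^+ (2 ^ k) ^+ s.+1).
  by rewrite (frobD hchar) exprAC [X in _ + X]exprAC xKK addrC.
by rewrite exprMn exprVn Ts_fixed num_fixed.
Qed.

Definition Gcoef (x : F) := reltrace x / reltrace x ^+ s.

Lemma Gcoef_fixed (x : F) : fixed (Gcoef x).
Proof. by rewrite /Gcoef exprMn exprVn exprAC reltrace_fixed. Qed.

Lemma GfunD_fixed (x v : F) : fixed v ->
  Gfun k r (x + v) = Gfun k r x + v + v ^+ s * Gcoef x.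
Proof.
move=> hv; rewrite /Gcoef.
have [T0|T_neq0] := eqVneq (reltrace x) 0.
  have hx := reltrace_eq0 T0.
  have hxv : fixed (x + v) by rewrite (frobD hchar) hx hv.
  by rewrite !Gfun_fixed // T0 mul0r mulr0 addr0.
have Ts_neq0 : reltrace x ^+ s != 0 by rewrite expf_neq0.
apply: (mulfI Ts_neq0).
rewrite -{1}(reltraceD_fixed x hv) Gfun_reltrace !mulrDr Gfun_reltrace.
rewrite [X in _ = _ + X]mulrCA [reltrace x ^+ _ * (_ / _)]mulrC divfK //.
rewrite (frobD hchar) hv !exprS /reltrace !(frobD hchar).
set a := x ^+ s; set b := (x ^+ (2 ^ k)) ^+ s; set c := x ^+ (2 ^ k); set w := v ^+ s.
transitivity (x * a + c * b + (a + b) * v + w * (x + c) + (w * v + w * v)); first by ring.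
by rewrite (addrr_pchar2 hchar) addr0.
Qed.

Definition Gpi (x : F) := 1 + Gcoef x ^+ (2 ^ r).

Lemma trace_Gfun_shift (x y : F) :
  trace k (Gfun k r (x + reltrace y)) = trace k (Gfun k r x) + trace (k + k) (y * Gpi x).
Proof.
rewrite (GfunD_fixed _ (reltrace_fixed y)) !(trace_add hchar) -addrA; congr (_ + _).
rewrite /Gpi mulrDr mulr1 (trace_add hchar) /reltrace -(trace_add hchar) (trace_double hchar).
congr (_ + _); set c := Gcoef x.
have -> : (y + y ^+ (2 ^ k)) ^+ s * c = y ^+ s * c + (y ^+ s * c) ^+ (2 ^ k).
  by rewrite (frobD hchar) mulrDl exprMn Gcoef_fixed exprAC.
rewrite (trace_double hchar) -(trace_card_frob hchar hcard _ r) exprMn -exprM -expnD subnK //.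
rewrite -(trace_card_frob hchar hcard _ k) exprMn -exprM -expnD (frob_card hcard).
by rewrite exprAC Gcoef_fixed.
Qed.

Hypothesis r_k_coprime : coprime r k.

(* If Gpi x = Gpi x' then w = reltrace x / reltrace x' is fixed by both x |-> x^(2^r) and
   x |-> x^(2^k), hence by x |-> x^2 since gcd(r, k) = 1. *)
Lemma Gpi_reltrace (x x' : F) : Gpi x = Gpi x' -> reltrace x = reltrace x'.
Proof.
rewrite /Gpi /Gcoef => /addrI /(@frob_inj _ hchar r).
set T := reltrace x; set T' := reltrace x'.
have [T0|T_neq0] := eqVneq T 0.
  rewrite T0 mul0r => /esym /eqP; rewrite mulf_eq0 invr_eq0 expf_eq0.
  by case/orP => [|/andP[_]] /eqP ->.
have [T'0|T'_neq0] := eqVneq T' 0.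
  by rewrite T'0 mul0r => /eqP; rewrite mulf_eq0 invr_eq0 expf_eq0 (negPf T_neq0) andbF.
move=> hc; set w := T / T'.
have w_neq0 : w != 0 by rewrite mulf_neq0 ?invr_neq0.
have hws : w ^+ s = w.
  rewrite exprMn exprVn -[X in _ = X / _](divfK (expf_neq0 s T_neq0)) hc.
  by field; rewrite T'_neq0 expf_neq0.
have hwk : fixed w by rewrite exprMn exprVn !reltrace_fixed.
have hwr : w ^+ (2 ^ r) = w by apply: (frob_fix_subn hchar (a := k - r)); rewrite ?subnK.
have := frob_fix_coprime hchar r_gt0 r_k_coprime hwr hwk.
case/sqr_idP => hw; first by move: w_neq0; rewrite hw eqxx.
by apply: (mulIf (invr_neq0 T'_neq0)); rewrite -/w hw mulfV.
Qed.

Local Notation W := (walsh (k + k) (Glam k r 1)).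

Lemma walsh_Glam1 (w : F) :
  W w = \sum_(x | Gpi x == reltrace w) sgnb (Glam k r 1 x) * sgnF (trace (k + k) (w * x)).
Proof.
apply: (walsh_fiber hchar hcard) => [|u v|x y]; first by rewrite addn_gt0 (leq_trans r_gt0).
  exact: trace_reltrace_sym.
have trG_idem : trace k (Gfun k r x) ^+ 2 = trace k (Gfun k r x).
  exact/(trace_sqr_id hchar)/Gfun_fixed_range.
rewrite /Glam !mul1r -!sgnFE trace_Gfun_shift (sgnFD hchar) //.
exact: (trace_card_sqr_id hchar hcard).
Qed.

(* Points of the fiber differ by fixed elements, on which trace (k + k) (a * _) vanishes. *)
Lemma walsh_Glam1_shift (w a x0 : F) : fixed a -> Gpi x0 = reltrace w ->
  W (w + a) = sgnF (trace (k + k) (a * x0)) * W w.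
Proof.
move=> ha hx0; rewrite !walsh_Glam1 reltraceD_fixed // mulr_sumr.
apply: eq_bigr => x /eqP hx.
have hxx0 : fixed (x + x0).
  apply: reltrace_eq0; rewrite reltraceD (Gpi_reltrace (etrans hx (esym hx0))).
  exact: (addrr_pchar2 hchar).
have tr_ax : trace (k + k) (a * x) = trace (k + k) (a * x0).
  have : trace (k + k) (a * (x + x0)) = 0.
    by apply: (trace_double_fix hchar); rewrite exprMn ha hxx0.
  by rewrite mulrDr (trace_add hchar) => /eqP; rewrite addr_eq0 (oppr_pchar2 hchar) => /eqP.
by rewrite mulrDl (sgnF_traceD hchar hcard) tr_ax; ring.
Qed.

Lemma walsh_Glam1_eq0 (w : F) : (forall x, Gpi x != reltrace w) -> W w = 0.
Proof. by move=> hw; rewrite walsh_Glam1 big_pred0 // => x; exact/negbTE. Qed.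

Lemma D2_dual_Glam1 (a b w : F) : fixed a -> fixed b ->
  D2 (dual (k + k) (Glam k r 1)) a b w = false.
Proof.
move=> ha hb; have hab : fixed (a + b) by rewrite (frobD hchar) ha hb.
have [x0 /eqP hx0|none] := pickP (fun x => Gpi x == reltrace w).
  apply: (D2_lt0_sgnF (walsh_Glam1_shift ha hx0) (walsh_Glam1_shift hb hx0)).
  by rewrite -addrA (walsh_Glam1_shift hab hx0) mulrDl (sgnF_traceD hchar hcard).
have W0 c : fixed c -> W (w + c) = 0.
  by move=> hc; apply: walsh_Glam1_eq0 => x; rewrite reltraceD_fixed // none.
by rewrite /D2 /dual -addrA !W0 // -[w]addr0 W0 // expr0n expn_eq0.
Qed.

End VectorialBent.

Lemma walsh_GlamZ (F : finFieldType) n k r (lam x : F) :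
  lam ^+ (2 ^ k) = lam -> lam != 0 ->
  walsh n (Glam k r lam) x = walsh n (Glam k r 1) (lam^-1 * x).
Proof.
move=> hlam lam_neq0; rewrite /walsh [RHS](reindex_inj (mulfI lam_neq0)) /=.
apply: eq_bigr => z _; rewrite /Glam !mul1r GfunZ //.
by rewrite mulrACA mulVf // mul1r.
Qed.

Lemma expf_coprime_inj (F : finFieldType) e : (0 < e)%N ->
  coprime e #|F|.-1 -> injective (fun x : F => x ^+ e).
Proof.
move=> e_gt0 he; case: (egcdnP #|F|.-1 e_gt0) => a q; rewrite (eqP he) addn1 => hq _.
have expK (x : F) : (x ^+ e) ^+ a = x.
  rewrite -exprM mulnC hq expr_cycle // prednK ?expf_card //.
  by rewrite (cardD1 0) inE.
by move=> x y /(congr1 (fun z => z ^+ a)) /=; rewrite !expK.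
Qed.

Lemma coprime_dt k r : (0 < r)%N -> (r <= k)%N ->
  coprime ((2 ^ k - 1) * ((2 ^ (r - 1) - 1) * 2 ^ (k - r) + 1) + 1) (2 ^ (k + k)).-1.
Proof.
move=> r_gt0 r_le_k.
have A_gt0 : (0 < 2 ^ (r - 1))%N by rewrite expn_gt0.
have s_gt0 : (0 < 2 ^ (k - r))%N by rewrite expn_gt0.
have K_eq : (2 ^ k = 2 * 2 ^ (r - 1) * 2 ^ (k - r))%N.
  by rewrite -expnS -expnD; congr (2 ^ _)%N; lia.
rewrite expnD K_eq; move: A_gt0 s_gt0.
move: (2 ^ (r - 1))%N (2 ^ (k - r))%N => A s A_gt0 s_gt0.
set K := (2 * A * s)%N; set d := ((K - 1) * _ + 1)%N.
have -> : (K * K).-1 = ((K - 1) * (K + 1))%N by rewrite /K; nia.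
rewrite coprimeMr; apply/andP; split.
  by rewrite -coprime_modl /d mulnC modnMDl coprime_modl coprime1n.
have /coprime_dvdr : (K + 1 %| (d * A).+1)%N.
  by apply/dvdnP; exists (A * (A - 1) * s + 1)%N; rewrite /d /K; nia.
by move=> /(_ _ (coprimenS (d * A))); rewrite coprimeMl => /andP[].
Qed.

Lemma dt_root_fixed (F : finFieldType) k r (lam delta : F) :
  #|F| = (2 ^ (k + k))%N -> (0 < r)%N -> (r <= k)%N -> lam ^+ (2 ^ k) = lam ->
  delta ^+ ((2 ^ k - 1) * ((2 ^ (r - 1) - 1) * 2 ^ (k - r) + 1) + 1) = lam -> delta = lam.
Proof.
move=> hcard r_gt0 r_le_k hlam hdelta.
have lam_root : lam ^+ ((2 ^ k - 1) * ((2 ^ (r - 1) - 1) * 2 ^ (k - r) + 1) + 1) = lam.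
  by rewrite addn1 mulnC expr_cycle // subn1 prednK ?expn_gt0.
apply: (expf_coprime_inj _ _ (etrans hdelta (esym lam_root))); first by rewrite addn1.
by rewrite hcard coprime_dt.
Qed.

Unset Implicit Arguments.

Theorem proposition3 (F : finFieldType) (n k r : nat)
  (hchar : (2 \in [pchar F])%N) (hcard : #|F| = (2 ^ n)%N)
  (hn : n = (2 * k)%N) (hr1 : (1 < r)%N) (hrk : (r < k)%N)
  (hgcd : coprime r k)
  (lam delta : F) (hlam_sub : lam ^+ (2 ^ k) = lam) (hlam0 : lam != 0)
  (hdelta : delta ^+ ((2 ^ k - 1) * ((2 ^ (r - 1) - 1) * 2 ^ (k - r) + 1) + 1) = lam) :
  (forall x : F, dual n (Glam k r lam) x = dual n (Glam k r 1) (delta^-1 * x)) /\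
  (forall a b : F, a ^+ (2 ^ k) = a -> a != 0 -> b ^+ (2 ^ k) = b -> b != 0 ->
     forall x : F, D2 (dual n (Glam k r lam)) a b x = false).
Proof.
have n_eq : n = (k + k)%N by rewrite hn mul2n addnn.
rewrite {hn}n_eq in hcard *.
have r_gt0 : (0 < r)%N := ltnW hr1.
have r_le_k : (r <= k)%N := ltnW hrk.
rewrite (dt_root_fixed hcard r_gt0 r_le_k hlam_sub hdelta).
have dual_lam x : dual (k + k) (Glam k r lam) x = dual (k + k) (Glam k r 1) (lam^-1 * x).
  by rewrite /dual walsh_GlamZ.
split=> // a b ha _ hb _ x.
have fixedV c : c ^+ (2 ^ k) = c -> (lam^-1 * c) ^+ (2 ^ k) = lam^-1 * c.
  by move=> hc; rewrite exprMn exprVn hlam_sub hc.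
have := D2_dual_Glam1 hchar hcard r_gt0 r_le_k hgcd (lam^-1 * x) (fixedV a ha) (fixedV b hb).
by rewrite /D2 !dual_lam !mulrDr.
Qed.
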